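(* Let $(\mathcal{G},c)$ be a colored directed acyclic graph with compatible coloring, and assume that $c(i)=c(j)$ implies $(\mathcal{G}_i,c)\cong(\mathcal{G}_j,c)$ for all vertices $i,j$. Then there is no directed edge $j\to i$ with $c(i)=c(j)$.
   Context: $\mathcal{G}=(V,\vec E)$ is a finite DAG; $j\to i$ means $(j,i)\in\vec E$. A coloring is $c:V\cup\vec E\to[r+R]$; compatible means $c(V)\cap c(\vec E)=\emptyset$ and $c(j\to i)=c(l\to k)$ implies $c(i)=c(k)$. $\mathrm{ch}(i)=\{k:i\to k\}$; $(\mathcal{G}_i,c)$ is the colored graph on $\{i\}\cup\mathrm{ch}(i)$ with edges $i\to k$, $k\in\mathrm{ch}(i)$, and colors inherited from $c$; $\cong$ is isomorphism of colored graphs. *)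

From mathcomp Require Import all_boot.
Set Implicit Arguments. Unset Strict Implicit. Unset Printing Implicit Defensive.

(* A finite directed graph on the finite vertex type V: E j i means j -> i. *)

Definition acyclic (V : finType) (E : rel V) : Prop :=
  forall (x : V) (p : seq V), path E x p -> last x p = x -> p = [::].

(* A coloring c : V ∪ E -> [r+R] is given by a vertex part cv and an edge
   part ce (ce j i is the color of the edge j -> i; only meaningful if E j i). *)
Definition compatible (V : finType) (E : rel V) (K : nat)
    (cv : V -> 'I_K) (ce : V -> V -> 'I_K) : Prop :=
  (forall (v j i : V), E j i -> cv v <> ce j i) /\
  (forall (j i l k : V), E j i -> E l k -> ce j i = ce l k -> cv i = cv k).

Definition loc_vert (V : finType) (E : rel V) (i : V) : {set V} :=
  i |: [set k | E i k].

Definition loc_edge (V : finType) (E : rel V) (i : V) (x y : V) : bool :=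
  (x == i) && E i y.

Definition loc_iso (V : finType) (E : rel V) (K : nat)
    (cv : V -> 'I_K) (ce : V -> V -> 'I_K) (i j : V) : Prop :=
  exists f : V -> V,
    [/\ {in loc_vert E i &, injective f},
        f @: loc_vert E i = loc_vert E j,
        {in loc_vert E i &, forall x y,
            loc_edge E j (f x) (f y) = loc_edge E i x y},
        {in loc_vert E i, forall x, cv (f x) = cv x} &
        {in loc_vert E i &, forall x y,
            loc_edge E i x y -> ce (f x) (f y) = ce x y}].

(* If j -> i with c(i) = c(j), an isomorphism (G_j, c) ≅ (G_i, c) must send
   the root j to i and the child i to a child k of i with c(k) = c(i).  So the
   edge i -> k again joins two vertices of equal colour, and iterating yields
   an infinite directed path, which a finite acyclic graph cannot contain. *)

From mathcomp Require Import all_boot.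

Set Implicit Arguments.
Unset Strict Implicit.
Unset Printing Implicit Defensive.

Section AcyclicGraph.

Variables (V : finType) (E : rel V).
Hypothesis acyclicE : acyclic E.

Definition reach (x : V) : {set V} := [set y | connect E x y].

Lemma acyclic_edge_not_connect (x y : V) : E x y -> ~~ connect E y x.
Proof.
move=> Exy; apply/connectP => -[p pth lst].
by have := acyclicE (x := x) (p := y :: p); rewrite /= Exy pth => /(_ isT (esym lst)).
Qed.

Lemma acyclic_reach_proper (x y : V) : E x y -> reach y \proper reach x.
Proof.
move=> Exy; apply/properP; split.
  by apply/subsetP => z; rewrite !inE; apply: connect_trans (connect1 Exy).
by exists x; rewrite !inE ?connect0 ?acyclic_edge_not_connect.
Qed.

Lemma acyclic_no_successor_closed (P : V -> Prop) :
  (forall x, P x -> exists2 y, E x y & P y) -> forall x, ~ P x.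
Proof.
move=> succP x; move: {2}#|reach x|.+1 (ltnSn #|reach x|) => n.
elim: n x => [|n IHn] x // reach_lt Px.
have [y Exy Py] := succP x Px.
apply: (IHn y) Py.
exact: leq_trans (proper_card (acyclic_reach_proper Exy)) reach_lt.
Qed.

End AcyclicGraph.

Lemma loc_iso_child (V : finType) (E : rel V) (K : nat)
    (cv : V -> 'I_K) (ce : V -> V -> 'I_K) (i j x : V) :
  loc_iso E cv ce i j -> E i x -> exists2 k, E j k & cv k = cv x.
Proof.
move=> [f [_ _ f_edge f_cv _]] Eix.
have iGi : i \in loc_vert E i by rewrite setU11.
have xGi : x \in loc_vert E i by rewrite in_setU1 inE Eix orbT.
have := f_edge i x iGi xGi; rewrite /loc_edge eqxx Eix => /andP [_ Ejfx].
by exists (f x); last exact: f_cv.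
Qed.

Theorem lemma7p13 (V : finType) (E : rel V) (r R : nat)
    (cv : V -> 'I_(r + R)) (ce : V -> V -> 'I_(r + R)) :
  acyclic E ->
  compatible E cv ce ->
  (forall i j : V, cv i = cv j -> loc_iso E cv ce i j) ->
  forall i j : V, E j i -> cv i <> cv j.
Proof.
move=> acyclicE _ colour_iso.
pose same_coloured_parent x := exists2 y, E y x & cv y = cv x.
have succ_closed x : same_coloured_parent x ->
    exists2 k, E x k & same_coloured_parent k.
  move=> [y Eyx cyx].
  have [k Exk ckx] := loc_iso_child (colour_iso y x cyx) Eyx.
  by exists k; last exists x.
move=> i j Eji cij.
by apply: (acyclic_no_successor_closed acyclicE succ_closed (x := i)); exists j.
Qed.
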